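(* Let $\mu>0$ and let $\mathcal{D}'_\mu$ be the class of random variables $D$ that are mixed Poisson$(X)$ with $\mathbb{P}(X=\lambda)=1-\mathbb{P}(X=0)=\mu/\lambda$ for some $\lambda\ge\mu$. Over $D\in\mathcal{D}'_\mu$, $q_D$ is minimized for $\lambda=\max(\mu,\mu_c)$, where $\mu_c$ is the largest real root of $2x=e^{x-1/2}$ ($\mu_c\approx1.756$).
   Context: For a non-negative real random variable $X$, $D$ is mixed Poisson$(X)$ if $\mathbb{P}(D=k)=\mathbb{E}(X^ke^{-X}/k!)$, $k\ge0$; its generating function is $f_D(s)=\mathbb{E}(e^{-(1-s)X})$ and $\bar f_D(s)=\mathbb{E}(Xe^{-(1-s)X})/\mathbb{E}(X)$. $z_D$ is the smallest root in $[0,1]$ of $s=\bar f_D(s)$ and $q_D=f_D(z_D)$. For $D$ in $\mathcal{D}'_\mu$ with parameter $\lambda$: $f_D(s)=1-\mu/\lambda+(\mu/\lambda)e^{-\lambda(1-s)}$ and $\bar f_D(s)=e^{-\lambda(1-s)}$. *)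

From Stdlib Require Import Reals Lra.
Open Scope R_scope.

(* For D in D'_mu with parameter lam (mixed Poisson(X), P(X=lam)=mu/lam,
   P(X=0)=1-mu/lam), the generating function f_D and the size-biased
   generating function bar f_D, as given in the paper. *)
Definition fD (mu lam s : R) : R := 1 - mu / lam + (mu / lam) * exp (- lam * (1 - s)).
Definition fbarD (lam s : R) : R := exp (- lam * (1 - s)).

Definition is_zD (lam z : R) : Prop :=
  0 <= z <= 1 /\ z = fbarD lam z /\
  (forall s, 0 <= s <= 1 -> s = fbarD lam s -> z <= s).

Definition qD (mu lam z : R) : R := fD mu lam z.

Definition is_mu_c (m : R) : Prop :=
  2 * m = exp (m - 1/2) /\ (forall x, 2 * x = exp (x - 1/2) -> x <= m).

(* Writing w = lam (1 - z) for the extinction root z < 1 of the size-biased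
   generating function, one has z = exp (-w), lam = w / (1 - exp (-w)) (an
   increasing bijection of (0, oo) onto (1, oo)) and
   1 - q_D = mu (1 - exp (-w))^2 / w.  The derivative of the last quotient has
   the sign of 1 + 2w - exp w, which vanishes at w_c = mu_c - 1/2 where also
   lam = mu_c; so 1 - q_D is maximal at lam = mu_c and decreasing beyond it.
   For lam <= 1 there is no root below 1 and q_D = 1. *)
From Stdlib Require Import Reals Lra.
From Coquelicot Require Import Coquelicot.
Open Scope R_scope.

Lemma deriv_pos_increasing (f f' : R -> R) a b :
  (forall c, a <= c <= b -> derivable_pt_lim f c (f' c)) ->
  (forall c, a < c < b -> 0 < f' c) -> a < b -> f a < f b.
Proof.
  intros df f'_pos ab.
  destruct (MVT_cor2 f f' a b ab df) as [c [fab c_in]].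
  pose proof (f'_pos c c_in); nra.
Qed.

Lemma deriv_neg_decreasing (f f' : R -> R) a b :
  (forall c, a <= c <= b -> derivable_pt_lim f c (f' c)) ->
  (forall c, a < c < b -> f' c < 0) -> a < b -> f b < f a.
Proof.
  intros df f'_neg ab.
  enough (- f a < - f b) by lra.
  apply (deriv_pos_increasing (fun x => - f x) (fun x => - f' x)); auto.
  - intros c c_in; exact (derivable_pt_lim_opp f c _ (df c c_in)).
  - intros c c_in; pose proof (f'_neg c c_in); lra.
Qed.

Lemma exp_neg_lt1 c : 0 < c -> exp (- c) < 1.
Proof. intros; rewrite <- exp_0; apply exp_increasing; lra. Qed.

Definition crit (w : R) : R := 1 + 2 * w - exp w.

Lemma crit_derive c : derivable_pt_lim crit c (2 - exp c).
Proof. apply is_derive_Reals; unfold crit; auto_derive; [easy | ring]. Qed.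

Lemma crit0 : crit 0 = 0.
Proof. unfold crit; rewrite exp_0; ring. Qed.

Lemma crit_increasing a b : a < b <= ln 2 -> crit a < crit b.
Proof.
  intros ab; apply (deriv_pos_increasing crit (fun c => 2 - exp c));
    [intros; apply crit_derive | | lra].
  intros c c_in; rewrite <- (exp_ln 2) by lra; enough (exp c < exp (ln 2)) by lra.
  apply exp_increasing; lra.
Qed.

Lemma crit_decreasing a b : ln 2 <= a < b -> crit b < crit a.
Proof.
  intros ab; apply (deriv_neg_decreasing crit (fun c => 2 - exp c));
    [intros; apply crit_derive | | lra].
  intros c c_in; rewrite <- (exp_ln 2) by lra; enough (exp (ln 2) < exp c) by lra.
  apply exp_increasing; lra.
Qed.

Section CriticalPoint.

Variable wc : R.
Hypothesis wc_pos : 0 < wc.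
Hypothesis crit_wc : crit wc = 0.

Lemma ln2_lt_crit_root : ln 2 < wc.
Proof.
  destruct (Rlt_or_le (ln 2) wc) as [|wc_le]; auto.
  pose proof (crit_increasing 0 wc (conj wc_pos wc_le)); rewrite crit0 in *; lra.
Qed.

Lemma crit_pos_before w : 0 < w < wc -> 0 < crit w.
Proof.
  intros w_in; pose proof ln2_lt_crit_root.
  destruct (Rle_or_lt w (ln 2)).
  - rewrite <- crit0; apply crit_increasing; lra.
  - rewrite <- crit_wc; apply crit_decreasing; lra.
Qed.

Lemma crit_neg_after w : wc < w -> crit w < 0.
Proof.
  intros; rewrite <- crit_wc; apply crit_decreasing; pose proof ln2_lt_crit_root; lra.
Qed.

End CriticalPoint.

Lemma mu_c_gt1 m : is_mu_c m -> 1 < m.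
Proof.
  intros [_ m_max].
  (* besides the root 1/2 there is one in (1, 5), and m is the largest *)
  set (f x := exp (x - 1/2) - 2 * x).
  assert (f1 : f 1 < 0).
  { unfold f; replace (1 - 1/2) with (1/2) by field.
    assert (exp (1/2) * exp (1/2) = exp 1) by (rewrite <- exp_plus; f_equal; field).
    pose proof exp_le_3; pose proof (exp_pos (1/2)); nra. }
  assert (f5 : 0 < f 5).
  { unfold f; replace (5 - 1/2) with (9/4 + 9/4) by field; rewrite exp_plus.
    pose proof (exp_ineq1_le (9/4)); nra. }
  destruct (IVT f 1 5 ltac:(unfold f; reg) ltac:(lra) f1 f5) as [r [r_in fr]].
  assert (r <> 1) by (intros ->; lra).
  enough (r <= m) by lra.
  apply m_max; unfold f in fr; lra.
Qed.

Definition lam_of (w : R) : R := w / (1 - exp (- w)).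

Definition qgap (w : R) : R := (1 - exp (- w)) ^ 2 / w.

Definition lam_of' (c : R) : R := (1 - exp (- c) - c * exp (- c)) / (1 - exp (- c)) ^ 2.

Lemma lam_of_derive c : 0 < c -> derivable_pt_lim lam_of c (lam_of' c).
Proof.
  intros c_pos; pose proof (exp_neg_lt1 c c_pos).
  apply is_derive_Reals; unfold lam_of, lam_of'; auto_derive; [lra | field; lra].
Qed.

Lemma lam_of_increasing a b : 0 < a -> a < b -> lam_of a < lam_of b.
Proof.
  intros a_pos ab; apply (deriv_pos_increasing lam_of lam_of' a b); auto.
  - intros c c_in; apply lam_of_derive; lra.
  - intros c c_in; pose proof (exp_neg_lt1 c ltac:(lra)).
    pose proof (exp_ineq1 c ltac:(lra)); pose proof (exp_pos (- c)).
    assert (exp (- c) * exp c = 1) by (rewrite <- exp_plus, Rplus_opp_l; apply exp_0).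
    unfold lam_of'; apply Rdiv_lt_0_compat; nra.
Qed.

Lemma lam_of_le_inv a b : 0 < a -> 0 < b -> lam_of a <= lam_of b -> a <= b.
Proof.
  intros a_pos b_pos lab; destruct (Rle_or_lt a b) as [|ba]; auto.
  pose proof (lam_of_increasing b a b_pos ba); lra.
Qed.

Lemma lam_of_crit wc : crit wc = 0 -> 0 < wc -> lam_of wc = wc + 1/2.
Proof.
  unfold crit, lam_of; intros crit_wc wc_pos.
  rewrite exp_Ropp; replace (exp wc) with (1 + 2 * wc) by lra; field; lra.
Qed.

Lemma qgap_ge0 w : 0 < w -> 0 <= qgap w.
Proof. intros; unfold qgap; apply Rdiv_le_0_compat; [apply pow2_ge_0 | lra]. Qed.

Definition qgap' (c : R) : R := (1 - exp (- c)) * exp (- c) / c ^ 2 * crit c.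

Lemma qgap_derive c : 0 < c -> derivable_pt_lim qgap c (qgap' c).
Proof.
  intros c_pos; apply is_derive_Reals; unfold qgap, qgap', crit; auto_derive; [lra|].
  rewrite exp_Ropp; pose proof (exp_pos c); field; lra.
Qed.

Lemma qgap_derive_sign c : 0 < c ->
  0 < (1 - exp (- c)) * exp (- c) / c ^ 2.
Proof.
  intros c_pos; pose proof (exp_neg_lt1 c c_pos); pose proof (exp_pos (- c)).
  apply Rdiv_lt_0_compat; nra.
Qed.

Section QgapPeak.

Variable wc : R.
Hypothesis wc_pos : 0 < wc.
Hypothesis crit_wc : crit wc = 0.

Lemma qgap_increasing_before a b : 0 < a -> a <= b <= wc -> qgap a <= qgap b.
Proof.
  intros a_pos ab; destruct (Req_dec a b) as [<-|]; [lra|]; left.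
  apply (deriv_pos_increasing qgap qgap' a b); [| | lra].
  - intros c c_in; apply qgap_derive; lra.
  - intros c c_in; pose proof (qgap_derive_sign c ltac:(lra)).
    pose proof (crit_pos_before wc wc_pos crit_wc c ltac:(lra)).
    unfold qgap'; nra.
Qed.

Lemma qgap_decreasing_after a b : wc <= a <= b -> qgap b <= qgap a.
Proof.
  intros ab; destruct (Req_dec a b) as [<-|]; [lra|]; left.
  apply (deriv_neg_decreasing qgap qgap' a b); [| | lra].
  - intros c c_in; apply qgap_derive; lra.
  - intros c c_in; pose proof (qgap_derive_sign c ltac:(lra)).
    pose proof (crit_neg_after wc wc_pos crit_wc c ltac:(lra)).
    unfold qgap'; nra.
Qed.

Lemma qgap_le_peak w : 0 < w -> qgap w <= qgap wc.
Proof.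
  intros w_pos; destruct (Rle_or_lt w wc).
  - apply qgap_increasing_before; lra.
  - apply qgap_decreasing_after; lra.
Qed.

End QgapPeak.

Lemma is_zD_one lam z : 0 < lam <= 1 -> is_zD lam z -> z = 1.
Proof.
  intros lam_in [[z0 z1] [z_fix _]]; unfold fbarD in z_fix.
  destruct (Req_dec z 1) as [|z_ne]; auto.
  assert (x_ne0 : - lam * (1 - z) <> 0).
  { intros e; assert (lam * (1 - z) = 0) by lra; apply Rmult_integral in H; lra. }
  (* z = exp x > 1 + x >= z for x = - lam (1 - z) *)
  pose proof (exp_ineq1 _ x_ne0); nra.
Qed.

Lemma is_zD_lt1 lam z : 1 < lam -> is_zD lam z -> z < 1.
Proof.
  intros lam_gt1 [_ [_ z_min]].
  (* [t] makes [(1 - t) (1 + lam t) > 1], so [1 - t] lies above its image and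
     the IVT yields a fixed point in [0, 1 - t]. *)
  set (t := (lam - 1) / (2 * lam)).
  assert (t_in : 0 < t < 1/2).
  { unfold t; split; [apply Rdiv_lt_0_compat; lra|].
    apply Rmult_lt_reg_r with (2 * lam); [lra|]; field_simplify; lra. }
  assert (lam_t : lam * t = (lam - 1) / 2) by (unfold t; field; lra).
  set (h s := s - fbarD lam s).
  assert (h0 : h 0 < 0) by (unfold h, fbarD; pose proof (exp_pos (- lam * (1 - 0))); lra).
  assert (h1t : 0 < h (1 - t)).
  { unfold h, fbarD; replace (- lam * (1 - (1 - t))) with (- (lam * t)) by ring.
    rewrite exp_Ropp; pose proof (exp_ineq1_le (lam * t)); pose proof (exp_pos (lam * t)).
    apply Rlt_0_minus, (Rmult_lt_reg_r (exp (lam * t))); [lra|].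
    rewrite Rinv_l by lra; nra. }
  destruct (IVT h 0 (1 - t) ltac:(unfold h, fbarD; reg) ltac:(lra) h0 h1t) as [s [s_in hs]].
  enough (z <= s) by lra.
  apply z_min; [lra | unfold h in hs; lra].
Qed.

Lemma qD_at_one mu lam : lam <> 0 -> qD mu lam 1 = 1.
Proof. intros; unfold qD, fD; rewrite Rminus_diag, Rmult_0_r, exp_0; field; auto. Qed.

Lemma qD_param mu lam z : 1 < lam -> is_zD lam z ->
  exists w, 0 < w /\ lam = lam_of w /\ qD mu lam z = 1 - mu * qgap w.
Proof.
  intros lam_gt1 z_root; pose proof (is_zD_lt1 lam z lam_gt1 z_root) as z_lt1.
  destruct z_root as [[z0 _] [z_fix _]]; unfold fbarD in z_fix.
  exists (lam * (1 - z)); split; [nra|].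
  assert (ew : exp (- (lam * (1 - z))) = z) by (rewrite z_fix at 2; f_equal; ring).
  unfold lam_of, qD, fD, qgap; rewrite ew, <- z_fix; split; field; lra.
Qed.

Lemma qgap_le_at_max mu muc wc w ws :
  0 < wc -> crit wc = 0 -> lam_of wc = muc -> 0 < w -> 0 < ws ->
  lam_of ws = Rmax mu muc -> mu <= lam_of w -> qgap w <= qgap ws.
Proof.
  intros wc_pos crit_wc lam_wc w_pos ws_pos lam_ws mu_le.
  pose proof (Rmax_l mu muc); pose proof (Rmax_r mu muc).
  destruct (Rle_or_lt (Rmax mu muc) (lam_of w)).
  - apply (qgap_decreasing_after wc); auto.
    split; apply lam_of_le_inv; lra.
  - assert (Rmax mu muc = muc) by (unfold Rmax in *; destruct (Rle_dec mu muc); lra).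
    assert (ws = wc) as -> by (apply Rle_antisym; apply lam_of_le_inv; lra).
    apply qgap_le_peak; auto.
Qed.

Theorem lemma3p5 (mu : R) (hmu : 0 < mu) (muc : R) (hmuc : is_mu_c muc)
  (zstar : R) (hzstar : is_zD (Rmax mu muc) zstar) :
  forall (lam z : R), mu <= lam -> is_zD lam z ->
    qD mu (Rmax mu muc) zstar <= qD mu lam z.
Proof.
  intros lam z mu_le z_root.
  pose proof (mu_c_gt1 muc hmuc) as muc_gt1.
  pose proof (Rmax_r mu muc).
  set (wc := muc - 1/2).
  assert (crit_wc : crit wc = 0) by (destruct hmuc as [e _]; unfold crit, wc in *; lra).
  assert (lam_wc : lam_of wc = muc) by (rewrite lam_of_crit; auto; unfold wc; lra).
  destruct (qD_param mu (Rmax mu muc) zstar ltac:(lra) hzstar) as [ws [ws_pos [lam_ws ->]]].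
  destruct (Rle_or_lt lam 1) as [lam_le1 | lam_gt1].
  - rewrite (is_zD_one lam z ltac:(lra) z_root), qD_at_one by lra.
    pose proof (qgap_ge0 ws ws_pos); nra.
  - destruct (qD_param mu _ _ lam_gt1 z_root) as [w [w_pos [lam_w ->]]].
    enough (qgap w <= qgap ws) by nra.
    apply (qgap_le_at_max mu muc wc); auto; unfold wc; lra.
Qed.
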